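(* Let $\eta,\theta\in\mathbb{R}$, $\sigma,\tau\ge0$ with $\sigma\tau\ne1$, and fix $t>0$. Suppose $(c_k)_{k\ge1}$ is a real sequence with $c_1=1$ satisfying, for every $k\ge2$, $$c_{k+1}=\frac{\theta-\eta t}{1+\sigma t}c_k+\frac{t+\tau}{1+\sigma t}\Big(\sum_{j=1}^{k-1}c_jc_{k-j}+\eta\sum_{j=0}^{k-1}c_{j+1}c_{k-j}+\sigma\sum_{j=0}^{k-1}c_{j+2}c_{k-j}\Big).$$ Then for every $p>1$ there exists a constant $M$ such that $|c_k|\le \dfrac{M^{k-2}}{k^p}$ for all $k\ge3$. *)

From Stdlib Require Import Reals List.
Open Scope R_scope.

(* rsum a b f = f a + f (a+1) + ... + f b  (empty, i.e. 0, if b < a). *)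
Definition rsum (a b : nat) (f : nat -> R) : R :=
  fold_right Rplus 0 (map f (seq a (S b - a))).

(* The recurrence of the paper, for a given k >= 2 (sequence indexed from 1;
   the value c 0 is unused). *)
Definition rec_holds (eta theta sigma tau t : R) (c : nat -> R) (k : nat) : Prop :=
  c (S k) =
    (theta - eta * t) / (1 + sigma * t) * c k
    + (t + tau) / (1 + sigma * t) *
      ( rsum 1 (k - 1) (fun j => c j * c (k - j)%nat)
        + eta * rsum 0 (k - 1) (fun j => c (S j) * c (k - j)%nat)
        + sigma * rsum 0 (k - 1) (fun j => c (S (S j)) * c (k - j)%nat)).

(* Multiplying the recurrence by 1 + sigma t and moving the term sigma c_{k+1} c_1 of the
   last sum to the left-hand side leaves (1 - sigma tau) c_{k+1}, which can be solved for
   since sigma tau <> 1; the right-hand side then only involves c_j with j <= k.  A strong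
   induction gives |c_k| <= K M^{k-2} / k^2: the weights 1/k^2 are stable under
   convolution, sum_{j=2}^{k-2} 1/(j^2 (k-j)^2) <= 4/k^2, because
   1/(j^2 (k-j)^2) <= (2/k^2) (1/j^2 + 1/(k-j)^2) and sum_{j>=2} 1/j^2 <= 1.  Finally
   k^p <= exp(2p)^{k-2} for k >= 3, so the polynomial factor is absorbed into M. *)

From Stdlib Require Import Reals Lra Lia List Wf_nat.
Open Scope R_scope.

Lemma fold_right_Rplus_init x l : fold_right Rplus x l = fold_right Rplus 0 l + x.
Proof. induction l as [|y l IH]; simpl; [ring | rewrite IH; ring]. Qed.

Lemma rsum_nil a b f : (b < a)%nat -> rsum a b f = 0.
Proof. intros Hba. unfold rsum. replace (S b - a)%nat with 0%nat by lia. reflexivity. Qed.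

Lemma rsum_first a b f : (a <= b)%nat -> rsum a b f = f a + rsum (S a) b f.
Proof. intros Hab. unfold rsum. replace (S b - a)%nat with (S (S b - S a)) by lia. reflexivity. Qed.

Lemma rsum_last a b f : (a <= S b)%nat -> rsum a (S b) f = rsum a b f + f (S b).
Proof.
  intros Hab. unfold rsum.
  replace (S (S b) - a)%nat with (S (S b - a)) by lia.
  rewrite seq_S, map_app, fold_right_app. cbn [map fold_right].
  replace (a + (S b - a))%nat with (S b) by lia.
  rewrite fold_right_Rplus_init. ring.
Qed.

Lemma rsum_first_last a b f : (a < b)%nat -> rsum a b f = f a + rsum (S a) (pred b) f + f b.
Proof.
  intros Hab. rewrite rsum_first by lia.
  destruct b as [|b]; [lia|]. rewrite rsum_last by lia. simpl. ring.
Qed.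

Lemma rsum_shift a b f : rsum a b (fun j => f (S j)) = rsum (S a) (S b) f.
Proof. unfold rsum. rewrite <- seq_shift, map_map. reflexivity. Qed.

Lemma rsum_le a b f g :
  (forall j, (a <= j <= b)%nat -> f j <= g j) -> rsum a b f <= rsum a b g.
Proof.
  intros Hfg. unfold rsum.
  assert (Hin : forall j, In j (seq a (S b - a)) -> f j <= g j)
    by (intros j Hj; apply in_seq in Hj; apply Hfg; lia).
  revert Hin. generalize (seq a (S b - a)) as l.
  induction l as [|j l IH]; intros Hin; simpl; [lra|].
  pose proof (Hin j (or_introl eq_refl)).
  pose proof (IH (fun i Hi => Hin i (or_intror Hi))). lra.
Qed.

Lemma rsum_abs a b f : Rabs (rsum a b f) <= rsum a b (fun j => Rabs (f j)).
Proof.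
  unfold rsum. induction (seq a (S b - a)) as [|j l IH]; simpl.
  - rewrite Rabs_R0. lra.
  - pose proof (Rabs_triang (f j) (fold_right Rplus 0 (map f l))). lra.
Qed.

Lemma rsum_plus a b f g : rsum a b (fun j => f j + g j) = rsum a b f + rsum a b g.
Proof. unfold rsum. induction (seq a (S b - a)) as [|j l IH]; simpl; [ring | rewrite IH; ring]. Qed.

Lemma rsum_scal a b r f : rsum a b (fun j => r * f j) = r * rsum a b f.
Proof. unfold rsum. induction (seq a (S b - a)) as [|j l IH]; simpl; [ring | rewrite IH; ring]. Qed.

Lemma rsum_telescope a b g :
  (a <= S b)%nat -> rsum a b (fun j => g (S j) - g j) = g (S b) - g a.
Proof.
  revert a. induction b as [|b IH]; intros a Hab.
  - destruct a as [|[|a]]; [| |lia]; unfold rsum; simpl; ring.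
  - destruct (Nat.eq_dec a (S (S b))) as [->|Ha].
    + rewrite rsum_nil by lia. ring.
    + rewrite rsum_last, IH by lia. ring.
Qed.

Lemma inv_sqr_le_inv_sub x : 1 < x -> / x ^ 2 <= / (x - 1) - / x.
Proof.
  intros Hx. replace (/ (x - 1) - / x) with (/ (x * (x - 1))) by (field; lra).
  apply Rinv_le_contravar; nra.
Qed.

Lemma inv_sqr_mul_le x y : 0 < x -> 0 < y ->
  / (x ^ 2 * y ^ 2) <= 2 / (x + y) ^ 2 * (/ x ^ 2 + / y ^ 2).
Proof.
  intros Hx Hy.
  replace (/ (x ^ 2 * y ^ 2)) with ((/ x + / y) ^ 2 / (x + y) ^ 2) by (field; lra).
  replace (/ x ^ 2 + / y ^ 2) with ((/ x) ^ 2 + (/ y) ^ 2) by (field; lra).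
  assert (Hs : 0 <= / (x + y) ^ 2) by (apply Rlt_le, Rinv_0_lt_compat; nra).
  assert (Hsq : (/ x + / y) ^ 2 <= 2 * ((/ x) ^ 2 + (/ y) ^ 2))
    by (pose proof (pow2_ge_0 (/ x - / y)); nra).
  apply Rle_trans with (2 * ((/ x) ^ 2 + (/ y) ^ 2) / (x + y) ^ 2);
    [apply Rmult_le_compat_r; assumption | right; unfold Rdiv; ring].
Qed.

Lemma rsum_inv_sqr_le_1 m : rsum 2 m (fun j => / INR j ^ 2) <= 1.
Proof.
  destruct (Nat.lt_ge_cases m 1) as [Hm | Hm]; [rewrite rsum_nil by lia; lra|].
  set (g := fun i => - / (INR i - 1)).
  apply Rle_trans with (rsum 2 m (fun j => g (S j) - g j)).
  - apply rsum_le. intros j Hj. unfold g. rewrite S_INR.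
    assert (Hj1 : 1 < INR j) by (apply (lt_INR 1); lia).
    pose proof (inv_sqr_le_inv_sub (INR j) Hj1).
    replace (INR j + 1 - 1) with (INR j) by ring. lra.
  - rewrite rsum_telescope by lia. unfold g. rewrite S_INR.
    replace (INR m + 1 - 1) with (INR m) by ring. simpl INR.
    assert (0 < / INR m) by (apply Rinv_0_lt_compat, (lt_INR 0); lia).
    replace (1 + 1 - 1) with 1 by ring. rewrite Rinv_1. lra.
Qed.

Lemma rsum_inv_sqr_rev_le_1 k : rsum 2 (k - 2) (fun j => / (INR k - INR j) ^ 2) <= 1.
Proof.
  destruct (Nat.lt_ge_cases k 3) as [Hk | Hk]; [rewrite rsum_nil by lia; lra|].
  set (g := fun i => / (INR k - INR i)).
  apply Rle_trans with (rsum 2 (k - 2) (fun j => g (S j) - g j)).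
  - apply rsum_le. intros j Hj. unfold g. rewrite S_INR.
    assert (INR j + 2 <= INR k)
      by (pose proof (le_INR (j + 2) k ltac:(lia)) as Hjk;
          rewrite plus_INR in Hjk; simpl in Hjk; lra).
    pose proof (inv_sqr_le_inv_sub (INR k - INR j) ltac:(lra)).
    replace (INR k - (INR j + 1)) with (INR k - INR j - 1) by ring. lra.
  - rewrite rsum_telescope by lia. unfold g.
    replace (S (k - 2)) with (k - 1)%nat by lia. rewrite !minus_INR by lia. simpl INR.
    assert (3 <= INR k) by (pose proof (le_INR 3 k Hk) as H3; simpl in H3; lra).
    assert (0 < / (INR k - (1 + 1))) by (apply Rinv_0_lt_compat; lra).
    replace (INR k - (INR k - 1)) with 1 by ring. rewrite Rinv_1. lra.
Qed.

Lemma rsum_inv_sqr_conv_le k : (3 <= k)%nat ->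
  rsum 2 (k - 2) (fun j => / (INR j ^ 2 * (INR k - INR j) ^ 2)) <= 4 / INR k ^ 2.
Proof.
  intros Hk.
  apply Rle_trans with
    (rsum 2 (k - 2) (fun j => 2 / INR k ^ 2 * (/ INR j ^ 2 + / (INR k - INR j) ^ 2))).
  - apply rsum_le. intros j Hj.
    assert (2 <= INR j) by (pose proof (le_INR 2 j ltac:(lia)) as H2; simpl in H2; lra).
    assert (INR j + 2 <= INR k)
      by (pose proof (le_INR (j + 2) k ltac:(lia)) as Hjk;
          rewrite plus_INR in Hjk; simpl in Hjk; lra).
    pose proof (inv_sqr_mul_le (INR j) (INR k - INR j)) as Hjk.
    replace (INR j + (INR k - INR j)) with (INR k) in Hjk by ring. apply Hjk; lra.
  - rewrite rsum_scal, rsum_plus.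
    pose proof (rsum_inv_sqr_le_1 (k - 2)). pose proof (rsum_inv_sqr_rev_le_1 k).
    assert (0 <= 2 / INR k ^ 2)
      by (apply Rle_mult_inv_pos; [lra | apply pow_lt, (lt_INR 0); lia]).
    replace (4 / INR k ^ 2) with (2 / INR k ^ 2 * 2) by (unfold Rdiv; ring).
    apply Rmult_le_compat_l; lra.
Qed.

(* The terms c_1 c_{k-1} and c_{k-1} c_1 of the Cauchy product are left out: since
   c_1 = 1 they are linear in c. *)
Definition inner_conv (c : nat -> R) (k : nat) : R :=
  rsum 2 (k - 2) (fun j => c j * c (k - j)%nat).

Lemma rsum_conv_split c k : (3 <= k)%nat ->
  rsum 1 (k - 1) (fun j => c j * c (k - j)%nat)
  = c 1%nat * c (k - 1)%nat + inner_conv c k + c (k - 1)%nat * c 1%nat.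
Proof.
  intros Hk. rewrite rsum_first_last by lia. unfold inner_conv.
  replace (pred (k - 1)) with (k - 2)%nat by lia.
  replace (k - (k - 1))%nat with 1%nat by lia. reflexivity.
Qed.

Lemma pow_div_sqr_le X M i j u v r : 0 <= X -> 1 <= M -> (i <= j)%nat ->
  0 < u -> 0 < v -> v <= r * u -> X * M ^ i / u ^ 2 <= r ^ 2 * (X * M ^ j / v ^ 2).
Proof.
  intros HX HM Hij Hu Hv Hvu.
  assert (HMij : M ^ i <= M ^ j) by (apply Rle_pow; assumption).
  assert (HMi : 0 < M ^ i) by (apply pow_lt; lra).
  replace (r ^ 2 * (X * M ^ j / v ^ 2)) with (X * M ^ j * (r ^ 2 * u ^ 2) / (v ^ 2 * u ^ 2))
    by (field; lra).
  replace (X * M ^ i / u ^ 2) with (X * M ^ i * v ^ 2 / (v ^ 2 * u ^ 2)) by (field; lra).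
  apply Rmult_le_compat_r;
    [apply Rlt_le, Rinv_0_lt_compat, Rmult_lt_0_compat; apply pow_lt; lra|].
  assert (v ^ 2 <= r ^ 2 * u ^ 2)
    by (replace (r ^ 2 * u ^ 2) with ((r * u) ^ 2) by ring; apply pow_incr; lra).
  apply Rmult_le_compat; [nra | apply pow2_ge_0 | apply Rmult_le_compat_l; lra | assumption].
Qed.

Lemma inner_conv_bound c K M k : 0 <= K -> 0 <= M -> (3 <= k)%nat ->
  (forall j, (2 <= j <= k - 2)%nat -> Rabs (c j) <= K * M ^ (j - 2) / INR j ^ 2) ->
  Rabs (inner_conv c k) <= 4 * K ^ 2 * M ^ (k - 4) / INR k ^ 2.
Proof.
  intros HK HM Hk Hc. unfold inner_conv.
  eapply Rle_trans; [apply rsum_abs|].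
  apply Rle_trans with
    (rsum 2 (k - 2) (fun j => K ^ 2 * M ^ (k - 4) * / (INR j ^ 2 * (INR k - INR j) ^ 2))).
  - apply rsum_le. intros j Hj. rewrite Rabs_mult.
    pose proof (Hc j Hj) as Hcj. pose proof (Hc (k - j)%nat ltac:(lia)) as Hckj.
    rewrite minus_INR in Hckj by lia.
    assert (2 <= INR j) by (pose proof (le_INR 2 j ltac:(lia)) as H2; simpl in H2; lra).
    assert (INR j + 2 <= INR k)
      by (pose proof (le_INR (j + 2) k ltac:(lia)) as Hjk;
          rewrite plus_INR in Hjk; simpl in Hjk; lra).
    replace (K ^ 2 * M ^ (k - 4) * / (INR j ^ 2 * (INR k - INR j) ^ 2))
      with (K * M ^ (j - 2) / INR j ^ 2 * (K * M ^ (k - j - 2) / (INR k - INR j) ^ 2)).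
    2: { replace (k - 4)%nat with (j - 2 + (k - j - 2))%nat by lia. rewrite pow_add.
         field. lra. }
    apply Rmult_le_compat; auto using Rabs_pos.
  - rewrite rsum_scal.
    replace (4 * K ^ 2 * M ^ (k - 4) / INR k ^ 2) with (K ^ 2 * M ^ (k - 4) * (4 / INR k ^ 2))
      by (unfold Rdiv; ring).
    apply Rmult_le_compat_l; [apply Rmult_le_pos; [nra | apply pow_le; lra]|].
    apply rsum_inv_sqr_conv_le; assumption.
Qed.

Lemma Rabs_mult_le_l u v B : Rabs v <= B -> Rabs (u * v) <= Rabs u * B.
Proof. intros Hv. rewrite Rabs_mult. apply Rmult_le_compat_l; [apply Rabs_pos | exact Hv]. Qed.

Definition growth_const (a b eta sigma K : R) : R :=
  4 * Rabs a + b * (8 + 16 * K + Rabs eta * (8 + 4 * K) + 4 * sigma * K).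

Lemma rec_rhs_bound a b eta sigma K Y x0 x1 s0 s1 s2 :
  0 <= b -> 0 <= sigma -> 0 <= K -> 0 <= Y ->
  Rabs x0 <= 4 * K * Y -> Rabs x1 <= 4 * K * Y ->
  Rabs s0 <= 16 * K ^ 2 * Y -> Rabs s1 <= 4 * K ^ 2 * Y -> Rabs s2 <= 4 * K ^ 2 * Y ->
  Rabs (a * x1 + b * (2 * x0 + s0 + eta * (2 * x1 + s1) + sigma * s2))
  <= K * Y * growth_const a b eta sigma K.
Proof.
  intros Hb Hsigma HK HY Hx0 Hx1 Hs0 Hs1 Hs2.
  assert (H2 : Rabs 2 = 2) by (apply Rabs_pos_eq; lra).
  pose proof (Rabs_mult_le_l 2 x0 _ Hx0) as H2x0.
  pose proof (Rabs_mult_le_l 2 x1 _ Hx1) as H2x1.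
  rewrite H2 in H2x0, H2x1.
  assert (Hx1s1 : Rabs (2 * x1 + s1) <= 8 * K * Y + 4 * K ^ 2 * Y)
    by (pose proof (Rabs_triang (2 * x1) s1); lra).
  pose proof (Rabs_mult_le_l eta _ _ Hx1s1) as Heta.
  pose proof (Rabs_mult_le_l sigma _ _ Hs2) as Hsig. rewrite (Rabs_pos_eq sigma) in Hsig by lra.
  set (inner := 2 * x0 + s0 + eta * (2 * x1 + s1) + sigma * s2).
  assert (Hinner : Rabs inner <= 8 * K * Y + 16 * K ^ 2 * Y
                     + Rabs eta * (8 * K * Y + 4 * K ^ 2 * Y) + sigma * (4 * K ^ 2 * Y)).
  { pose proof (Rabs_triang (2 * x0 + s0 + eta * (2 * x1 + s1)) (sigma * s2)).
    pose proof (Rabs_triang (2 * x0 + s0) (eta * (2 * x1 + s1))).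
    pose proof (Rabs_triang (2 * x0) s0). unfold inner. lra. }
  pose proof (Rabs_mult_le_l b _ _ Hinner) as Hbinner. rewrite (Rabs_pos_eq b) in Hbinner by lra.
  pose proof (Rabs_mult_le_l a _ _ Hx1) as Hax1.
  pose proof (Rabs_triang (a * x1) (b * inner)).
  apply Rle_trans with (Rabs a * (4 * K * Y) + b * (8 * K * Y + 16 * K ^ 2 * Y
                        + Rabs eta * (8 * K * Y + 4 * K ^ 2 * Y) + sigma * (4 * K ^ 2 * Y)));
    [lra | right; unfold growth_const; ring].
Qed.

Section Recurrence.

Variables (eta theta sigma tau t : R) (c : nat -> R).
Hypotheses (Hsigma : 0 <= sigma) (Htau : 0 <= tau) (Hst : sigma * tau <> 1) (Ht : 0 < t).
Hypothesis Hc1 : c 1%nat = 1.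
Hypothesis Hrec : forall k, (2 <= k)%nat -> rec_holds eta theta sigma tau t c k.

Lemma rec_holds_isolated k : (3 <= k)%nat ->
  (1 - sigma * tau) * c (S k)
  = (theta - eta * t) * c k
    + (t + tau) * (2 * c (k - 1)%nat + inner_conv c k
                   + eta * (2 * c k + inner_conv c (S k)) + sigma * inner_conv c (S (S k))).
Proof.
  intros Hk. pose proof (Hrec k ltac:(lia)) as Hk_rec. unfold rec_holds in Hk_rec.
  destruct k as [|k]; [lia|]. replace (S k - 1)%nat with k in * by lia.
  assert (E1 : rsum 1 k (fun j => c j * c (S k - j)%nat) = 2 * c k + inner_conv c (S k)).
  { replace k with (S k - 1)%nat at 1 by lia.
    rewrite rsum_conv_split, Hc1 by lia. replace (S k - 1)%nat with k by lia. ring. }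
  assert (E2 : rsum 0 k (fun j => c (S j) * c (S k - j)%nat)
               = 2 * c (S k) + inner_conv c (S (S k))).
  { transitivity (rsum 1 (S k) (fun j => c j * c (S (S k) - j)%nat));
      [rewrite <- rsum_shift; reflexivity|].
    replace (S k) with (S (S k) - 1)%nat at 1 by lia.
    rewrite rsum_conv_split, Hc1 by lia. replace (S (S k) - 1)%nat with (S k) by lia. ring. }
  assert (E3 : rsum 0 k (fun j => c (S (S j)) * c (S k - j)%nat)
               = inner_conv c (S (S (S k))) + c (S (S k))).
  { transitivity (rsum 2 (S (S k)) (fun j => c j * c (S (S (S k)) - j)%nat));
      [rewrite <- !rsum_shift; reflexivity|].
    rewrite rsum_last by lia. unfold inner_conv.
    replace (S (S (S k)) - S (S k))%nat with 1%nat by lia. rewrite Hc1.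
    replace (S (S (S k)) - 2)%nat with (S k) by lia. ring. }
  rewrite E1, E2, E3 in Hk_rec.
  assert (Hd : 0 < 1 + sigma * t) by nra.
  set (x := c (S (S k))) in *.
  assert (Hx : (1 + sigma * t) * x
               = (theta - eta * t) * c (S k)
                 + (t + tau) * (2 * c k + inner_conv c (S k)
                                + eta * (2 * c (S k) + inner_conv c (S (S k)))
                                + sigma * (inner_conv c (S (S (S k))) + x)))
    by (rewrite Hk_rec at 1; field; lra).
  lra.
Qed.

Lemma growth_step K M k : 0 <= K -> 1 <= M ->
  growth_const (theta - eta * t) (t + tau) eta sigma K <= M * Rabs (1 - sigma * tau) ->
  (3 <= k)%nat ->
  (forall j, (2 <= j <= k)%nat -> Rabs (c j) <= K * M ^ (j - 2) / INR j ^ 2) ->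
  Rabs (c (S k)) <= K * M ^ (S k - 2) / INR (S k) ^ 2.
Proof.
  intros HK HM HG Hk Hc.
  assert (Hkr : 3 <= INR k) by (pose proof (le_INR 3 k Hk) as H3; simpl in H3; lra).
  pose proof (S_INR k) as HSk. pose proof (S_INR (S k)) as HSSk.
  assert (Hk1 : INR (k - 1) = INR k - 1) by (rewrite minus_INR by lia; reflexivity).
  set (Y := M ^ (k - 2) / INR (S k) ^ 2).
  assert (HY : 0 <= Y) by (apply Rle_mult_inv_pos; [apply pow_le | apply pow_lt]; lra).
  assert (HK2 : 0 <= 4 * K ^ 2) by nra.
  assert (Hconv : forall m, (3 <= m <= S (S k))%nat ->
                  Rabs (inner_conv c m) <= 4 * K ^ 2 * M ^ (m - 4) / INR m ^ 2)
    by (intros m Hm; apply inner_conv_bound; [lra | lra | lia | intros j Hj; apply Hc; lia]).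
  assert (Hc_prev : Rabs (c (k - 1)%nat) <= 4 * K * Y).
  { replace (4 * K * Y) with (2 ^ 2 * (K * M ^ (k - 2) / INR (S k) ^ 2))
      by (unfold Y, Rdiv; ring).
    eapply Rle_trans; [apply Hc; lia|]. apply pow_div_sqr_le; try lia; lra. }
  assert (Hc_last : Rabs (c k) <= 4 * K * Y).
  { replace (4 * K * Y) with (2 ^ 2 * (K * M ^ (k - 2) / INR (S k) ^ 2))
      by (unfold Y, Rdiv; ring).
    eapply Rle_trans; [apply Hc; lia|]. apply pow_div_sqr_le; try lia; lra. }
  assert (Hconv0 : Rabs (inner_conv c k) <= 16 * K ^ 2 * Y).
  { replace (16 * K ^ 2 * Y) with (2 ^ 2 * (4 * K ^ 2 * M ^ (k - 2) / INR (S k) ^ 2))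
      by (unfold Y, Rdiv; ring).
    eapply Rle_trans; [apply Hconv; lia|].
    apply pow_div_sqr_le; try lia; lra. }
  assert (Hconv1 : Rabs (inner_conv c (S k)) <= 4 * K ^ 2 * Y).
  { replace (4 * K ^ 2 * Y) with (1 ^ 2 * (4 * K ^ 2 * M ^ (k - 2) / INR (S k) ^ 2))
      by (unfold Y, Rdiv; ring).
    eapply Rle_trans; [apply Hconv; lia|].
    apply pow_div_sqr_le; try lia; lra. }
  assert (Hconv2 : Rabs (inner_conv c (S (S k))) <= 4 * K ^ 2 * Y).
  { replace (4 * K ^ 2 * Y) with (1 ^ 2 * (4 * K ^ 2 * M ^ (k - 2) / INR (S k) ^ 2))
      by (unfold Y, Rdiv; ring).
    eapply Rle_trans; [apply Hconv; lia|].
    apply pow_div_sqr_le; try lia; lra. }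
  pose proof (rec_rhs_bound (theta - eta * t) (t + tau) eta sigma K Y _ _ _ _ _
                ltac:(lra) Hsigma HK HY Hc_prev Hc_last Hconv0 Hconv1 Hconv2) as Hrhs.
  rewrite <- rec_holds_isolated, Rabs_mult in Hrhs by assumption.
  assert (HD : 0 < Rabs (1 - sigma * tau)) by (apply Rabs_pos_lt; lra).
  replace (K * M ^ (S k - 2) / INR (S k) ^ 2) with (K * Y * M)
    by (unfold Y; replace (S k - 2)%nat with (S (k - 2)) by lia; simpl pow; unfold Rdiv; ring).
  apply (Rmult_le_reg_l (Rabs (1 - sigma * tau))); [assumption|].
  assert (0 <= K * Y) by (apply Rmult_le_pos; assumption).
  apply Rle_trans with (K * Y * growth_const (theta - eta * t) (t + tau) eta sigma K);
    [assumption | nra].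
Qed.

Lemma growth_bound : exists K M, 1 <= K /\ 1 <= M /\
  forall k, (2 <= k)%nat -> Rabs (c k) <= K * M ^ (k - 2) / INR k ^ 2.
Proof.
  (* K takes care of k = 2, 3; the induction proper starts at c_4. *)
  set (K := 1 + 4 * Rabs (c 2%nat) + 9 * Rabs (c 3%nat)).
  pose proof (Rabs_pos (c 2%nat)). pose proof (Rabs_pos (c 3%nat)).
  assert (HK : 1 <= K) by (unfold K; lra).
  set (G := growth_const (theta - eta * t) (t + tau) eta sigma K).
  assert (HG : 0 <= G).
  { unfold G, growth_const.
    pose proof (Rabs_pos (theta - eta * t)).
    assert (0 <= Rabs eta * (8 + 4 * K)) by (apply Rmult_le_pos; [apply Rabs_pos | lra]).
    assert (0 <= sigma * K) by (apply Rmult_le_pos; lra).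
    apply Rplus_le_le_0_compat; [lra | apply Rmult_le_pos; lra]. }
  assert (HD : 0 < Rabs (1 - sigma * tau)) by (apply Rabs_pos_lt; lra).
  set (M := 1 + G / Rabs (1 - sigma * tau)).
  assert (HM : 1 <= M) by (unfold M; pose proof (Rle_mult_inv_pos G _ HG HD); lra).
  assert (HGM : G <= M * Rabs (1 - sigma * tau))
    by (replace (M * Rabs (1 - sigma * tau)) with (Rabs (1 - sigma * tau) + G)
          by (unfold M; field; lra); lra).
  exists K, M. split; [assumption | split; [assumption|]].
  intros k. induction k as [k IH] using lt_wf_ind. intros Hk.
  destruct (Nat.lt_ge_cases k 4) as [Hsmall | Hlarge].
  - assert (k = 2 \/ k = 3)%nat as [-> | ->] by lia.
    + replace (K * M ^ (2 - 2) / INR 2 ^ 2) with (K / 4) by (simpl; field).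
      unfold K. lra.
    + replace (K * M ^ (3 - 2) / INR 3 ^ 2) with (K * M / 9) by (simpl; field).
      assert (K <= K * M) by nra. unfold K in *. lra.
  - destruct k as [|k]; [lia|].
    apply growth_step; [lra | assumption | assumption | lia |].
    intros j Hj. apply IH; lia.
Qed.

End Recurrence.

Lemma Rpower_INR_le_exp_pow k p : (3 <= k)%nat -> 0 <= p ->
  Rpower (INR k) p <= exp (2 * p) ^ (k - 2).
Proof.
  intros Hk Hp.
  assert (Hkr : 3 <= INR k) by (pose proof (le_INR 3 k Hk) as H3; simpl in H3; lra).
  apply Rle_trans with (Rpower (exp (2 * (INR k - 2))) p).
  - apply Rle_Rpower_l; [assumption|].
    pose proof (exp_ineq1_le (2 * (INR k - 2))). lra.
  - rewrite <- Rpower_pow by apply exp_pos. unfold Rpower.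
    rewrite !ln_exp, minus_INR by lia. right. f_equal. simpl. ring.
Qed.

Lemma geometric_absorbs_power K M p k : 1 <= K -> 1 <= M -> 0 <= p -> (3 <= k)%nat ->
  K * M ^ (k - 2) / INR k ^ 2 <= (K * M * exp (2 * p)) ^ (k - 2) / Rpower (INR k) p.
Proof.
  intros HK HM Hp Hk.
  assert (Hkr : 3 <= INR k) by (pose proof (le_INR 3 k Hk) as H3; simpl in H3; lra).
  assert (HKM : 0 < (K * M) ^ (k - 2)) by (apply pow_lt; nra).
  assert (HKpow : K <= K ^ (k - 2))
    by (rewrite <- (pow_1 K) at 1; apply Rle_pow; [assumption | lia]).
  assert (HMpow : 0 < M ^ (k - 2)) by (apply pow_lt; lra).
  assert (HR : 0 < Rpower (INR k) p) by (unfold Rpower; apply exp_pos).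
  pose proof (Rpower_INR_le_exp_pow k p Hk Hp) as Hpow.
  apply Rle_trans with ((K * M) ^ (k - 2)).
  - rewrite Rpow_mult_distr. unfold Rdiv.
    apply Rle_trans with (K * M ^ (k - 2)); [| apply Rmult_le_compat_r; lra].
    rewrite <- (Rmult_1_r (K * M ^ (k - 2))) at 2.
    apply Rmult_le_compat_l; [nra|].
    rewrite <- Rinv_1. apply Rinv_le_contravar; [lra | nra].
  - rewrite (Rpow_mult_distr (K * M)). unfold Rdiv. rewrite Rmult_assoc.
    rewrite <- (Rmult_1_r ((K * M) ^ (k - 2))) at 1.
    apply Rmult_le_compat_l; [lra|].
    rewrite <- (Rinv_r (Rpower (INR k) p)) by lra.
    apply Rmult_le_compat_r; [apply Rlt_le, Rinv_0_lt_compat|]; assumption.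
Qed.

Theorem lemma3p2 (eta theta sigma tau t : R) (c : nat -> R) :
  0 <= sigma -> 0 <= tau -> sigma * tau <> 1 -> 0 < t ->
  c 1%nat = 1 ->
  (forall k : nat, (2 <= k)%nat -> rec_holds eta theta sigma tau t c k) ->
  forall p : R, 1 < p ->
  exists M : R, forall k : nat, (3 <= k)%nat ->
    Rabs (c k) <= M ^ (k - 2) / Rpower (INR k) p.
Proof.
  intros Hsigma Htau Hst Ht Hc1 Hrec p Hp.
  destruct (growth_bound eta theta sigma tau t c Hsigma Htau Hst Ht Hc1 Hrec)
    as (K & M & HK & HM & Hbound).
  exists (K * M * exp (2 * p)). intros k Hk.
  eapply Rle_trans; [apply Hbound; lia|].
  apply geometric_absorbs_power; [assumption | assumption | lra | assumption].
Qed.
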